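(* Let $k\ge 2$ and $s\ge 0$ be integers, and let $a_{n,m}$ be the number of ways to place $s$ pairwise non-overlapping $k$-mers on the $n\times m$ rectangular lattice with open boundary conditions in both directions. Then for $n\ge (k+1)s+1$ and $m\ge (k+1)s+1$, $$\sum_{i=0}^{2s+1}(-1)^i\binom{2s+1}{i}a_{n-i,m-i}=0.$$
   Context: The lattice is $\{1,\dots,n\}\times\{1,\dots,m\}$ with open boundaries. A $k$-mer occupies $k$ consecutive sites in one row or one column; a configuration is a set of $s$ $k$-mers with pairwise disjoint site sets. *)

From mathcomp Require Import all_boot all_order all_algebra.
Set Implicit Arguments. Unset Strict Implicit. Unset Printing Implicit Defensive.

Definition site (n m : nat) := ('I_n * 'I_m)%type.

Definition is_kmer (k n m : nat) (A : {set site n m}) : bool :=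
  [exists r : 'I_n, exists c : 'I_m,
     (c + k <= m) && (A == [set p : site n m | (p.1 == r) && (c <= p.2 < c + k)])]
  ||
  [exists r : 'I_n, exists c : 'I_m,
     (r + k <= n) && (A == [set p : site n m | (p.2 == c) && (r <= p.1 < r + k)])].

Definition is_config (k s n m : nat) (P : {set {set site n m}}) : bool :=
  [&& [forall A in P, is_kmer k A],
      #|P| == s &
      [forall A in P, forall B in P, (A != B) ==> [disjoint A & B]]].

Definition num_configs (k s n m : nat) : nat :=
  #|[set P : {set {set site n m}} | is_config k s P]|.

(* Write a(n, m) for the number of configurations; the alternating sum is the
   (2s+1)-th backward difference of a along the diagonal.  Removing the top row of
   the lattice expresses the number of packings of n+1 rows, some cells being
   already occupied by vertical k-mers hanging down from above, through the same
   counts for n rows with fewer k-mers or a forbidden region one row shallower.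
   Induction on s and on the depth of the forbidden region shows that for
   n >= ks + 1 the (s+1)-th difference of a in n vanishes, i.e. a is a polynomial
   of degree at most s in n; by transposition the same holds in m.  Finally
   1 - E_x E_y = (1 - E_x) + E_x (1 - E_y) for the shifts E_x, E_y, so every
   term of the (2s+1)-th diagonal difference contains (1 - E_x)^(s+1) or
   (1 - E_y)^(s+1). *)

From mathcomp Require Import all_boot all_order all_algebra zify.
Import GRing.Theory.
Set Implicit Arguments. Unset Strict Implicit. Unset Printing Implicit Defensive.

(** * Finite differences *)

Section FiniteDifferences.
Local Open Scope ring_scope.

(* [diffn j g] is [((1 - E)^j g) 0] for the shift [E g = g \o succn], so that
   [bdiff j f y] is the j-th backward difference of [f] at [y]. *)
Definition diffn (j : nat) (g : nat -> int) : int :=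
  \sum_(i < j.+1) (-1) ^+ i * 'C(j, i)%:Z * g i.

Definition bdiff (j : nat) (f : nat -> int) (y : nat) : int :=
  diffn j (fun i => f (y - i)%N).

Lemma eq_diffn j g1 g2 :
  (forall i, (i <= j)%N -> g1 i = g2 i) -> diffn j g1 = diffn j g2.
Proof. by move=> eq_g; apply: eq_bigr => i _; rewrite eq_g // -ltnS. Qed.

Lemma diffn_eq0 j g : (forall i, (i <= j)%N -> g i = 0) -> diffn j g = 0.
Proof. by move=> g0; rewrite /diffn big1 // => i _; rewrite g0 ?mulr0 // -ltnS. Qed.

Lemma diffnD j g1 g2 : diffn j (fun i => g1 i + g2 i) = diffn j g1 + diffn j g2.
Proof. by rewrite /diffn -big_split; apply: eq_bigr => i _; rewrite mulrDr. Qed.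

Lemma diffnB j g1 g2 : diffn j (fun i => g1 i - g2 i) = diffn j g1 - diffn j g2.
Proof. by rewrite /diffn -sumrB; apply: eq_bigr => i _; rewrite mulrBr. Qed.

Lemma diffn_sum (T : finType) (P : pred T) j (g : T -> nat -> int) :
  diffn j (fun i => \sum_(x | P x) g x i) = \sum_(x | P x) diffn j (g x).
Proof. by rewrite /diffn exchange_big; apply: eq_bigr => i _; rewrite mulr_sumr. Qed.

Lemma diffnS j g : diffn j.+1 g = diffn j (fun i => g i - g i.+1).
Proof.
rewrite diffnB /diffn big_ord_recl [in RHS]big_ord_recl /= !bin0.
have -> : \sum_(i < j.+1) (-1) ^+ bump 0 i * 'C(j.+1, bump 0 i)%:Z * g (bump 0 i)
  = \sum_(i < j.+1) (-1) ^+ i.+1 * 'C(j, i.+1)%:Z * g i.+1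
    - \sum_(i < j.+1) (-1) ^+ i * 'C(j, i)%:Z * g i.+1.
  rewrite -sumrB; apply: eq_bigr => i _.
  by rewrite /bump add1n binS PoszD exprS mulrDr mulrDl !mulN1r !mulNr.
by rewrite big_ord_recr /= bin_small // mulr0 mul0r addr0 addrA.
Qed.

Lemma eq_bdiff j f g y : f =1 g -> bdiff j f y = bdiff j g y.
Proof. by move=> eq_fg; apply: eq_diffn => i _; rewrite eq_fg. Qed.

Lemma bdiff0 f y : bdiff 0 f y = f y.
Proof. by rewrite /bdiff /diffn big_ord1 expr0 bin0 !mul1r subn0. Qed.

Lemma bdiffB j f g y :
  bdiff j (fun u => f u - g u) y = bdiff j f y - bdiff j g y.
Proof. exact: diffnB. Qed.

Lemma bdiff_pred j f y : bdiff j (fun u => f u.-1) y = bdiff j f y.-1.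
Proof. by apply: eq_diffn => i _; congr f; lia. Qed.

Lemma bdiffS j f y : bdiff j.+1 f y = bdiff j (fun u => f u - f u.-1) y.
Proof. by rewrite /bdiff diffnS; apply: eq_diffn => i _; congr (_ - f _); lia. Qed.

Lemma bdiff_eq0_lift j a f :
  (forall y, (a <= y)%N -> bdiff j f y = 0) ->
  forall t y, (a + t <= y)%N -> bdiff (j + t)%N f y = 0.
Proof.
move=> f0; elim=> [|t IHt] y le_y; first by rewrite addn0 f0 // -(addn0 a).
by rewrite addnS bdiffS bdiffB bdiff_pred !IHt ?subrr //; lia.
Qed.

Lemma bdiff_shift_sum (I : finType) (P : pred I) (G : I -> nat -> int) F j a n :
  (forall y, (a <= y)%N -> F y.+1 = \sum_(x | P x) G x y) -> (a + j < n)%N ->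
  bdiff j F n = \sum_(x | P x) bdiff j (G x) n.-1.
Proof.
move=> FG lt_n; rewrite -diffn_sum; apply: eq_diffn => i le_i.
by rewrite (_ : (n - i = (n.-1 - i).+1)%N) ?FG //; lia.
Qed.

Lemma diffn_diag_eq0 a b (f : nat -> nat -> int) c :
  (forall x y, (c + a <= x)%N -> bdiff a (f^~ y) x = 0) ->
  (forall x y, (c + b <= y)%N -> bdiff b (f x) y = 0) ->
  forall x y, (c + (a + b).-1 <= x)%N -> (c + (a + b).-1 <= y)%N ->
  diffn (a + b)%N.-1 (fun i => f (x - i)%N (y - i)%N) = 0.
Proof.
elim: a b f c => [|a IHa] b f c fx0 fy0 x y le_x le_y.
  apply: diffn_eq0 => i le_i; rewrite -(bdiff0 (f^~ _)) fx0 //; lia.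
elim: b f c fx0 fy0 x y le_x le_y => [|b IHb] f c fx0 fy0 x y le_x le_y.
  apply: diffn_eq0 => i le_i; rewrite -bdiff0 fy0 //; lia.
pose dx u v := f u v - f u.-1 v.
pose dy u v := f u.-1 v - f u.-1 v.-1.
have dx_x u v : (c.+1 + a <= u)%N -> bdiff a (dx^~ v) u = 0.
  by move=> le_u; rewrite -bdiffS fx0 //; lia.
have dx_y u v : (c.+1 + b.+1 <= v)%N -> bdiff b.+1 (dx u) v = 0.
  by move=> le_v; rewrite bdiffB !fy0 ?subrr //; lia.
have dy_x u v : (c.+1 + a.+1 <= u)%N -> bdiff a.+1 (dy^~ v) u = 0.
  move=> le_u; rewrite bdiffB (bdiff_pred _ (f^~ v)) (bdiff_pred _ (f^~ v.-1)).
  by rewrite !fx0 ?subrr //; lia.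
have dy_y u v : (c.+1 + b <= v)%N -> bdiff b (dy u) v = 0.
  by move=> le_v; rewrite -bdiffS fy0 //; lia.
have dx_diag : diffn (a + b)%N (fun i => dx (x - i)%N (y - i)%N) = 0.
  by rewrite (_ : (a + b = (a + b.+1).-1)%N) ?(IHa _ _ _ dx_x dx_y) //; lia.
have dy_diag : diffn (a + b)%N (fun i => dy (x - i)%N (y - i)%N) = 0.
  by rewrite (_ : (a + b = (a.+1 + b).-1)%N) ?(IHb _ _ dy_x dy_y) //; lia.
rewrite (_ : ((a.+1 + b.+1).-1 = (a + b).+1)%N) ?diffnS; last by lia.
rewrite (@eq_diffn _ _ (fun i => dx (x - i)%N (y - i)%N + dy (x - i)%N (y - i)%N)).
  by rewrite diffnD dx_diag dy_diag addr0.
by move=> i _; rewrite /dx /dy addrA subrK; congr (_ - f _ _); lia.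
Qed.
End FiniteDifferences.

(** * Splitting off the top row *)

Lemma forall_in_andb (T : finType) (D : {pred T}) (A B : pred T) :
  [forall x in D, A x && B x] = [forall x in D, A x] && [forall x in D, B x].
Proof.
apply/forall_inP/andP => [AB|[/forall_inP A_ /forall_inP B_] x x_in].
  by split; apply/forall_inP => x /AB /andP[].
by rewrite A_ ?B_.
Qed.

Section Glue.
Variables (T : finType) (n : nat).

Definition top_row (x : T) : 'I_n.+1 * T := (ord0, x).
Definition shift_down (p : 'I_n * T) : 'I_n.+1 * T := (lift ord0 p.1, p.2).

Variant row_spec : 'I_n.+1 * T -> Type :=
  | TopRow x : row_spec (top_row x)
  | ShiftDown p : row_spec (shift_down p).

Lemma rowP z : row_spec z.
Proof.
case: z => r x; case: (unliftP ord0 r) => [r' ->|->]; first exact: (ShiftDown (r', x)).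
exact: TopRow.
Qed.

Lemma top_row_inj : injective top_row.
Proof. by move=> x y [->]. Qed.

Lemma shift_down_inj : injective shift_down.
Proof. by move=> [r x] [r' x'] [/addnI/val_inj -> ->]. Qed.

Lemma top_row_shift_down x p : (top_row x == shift_down p) = false.
Proof. by apply/eqP => /(congr1 (fun z => val z.1)). Qed.

Definition glue (X : {set T}) (P : {set 'I_n * T}) : {set 'I_n.+1 * T} :=
  top_row @: X :|: shift_down @: P.

Lemma mem_glue_top X P x : (top_row x \in glue X P) = (x \in X).
Proof.
rewrite !inE (mem_imset _ _ top_row_inj); case: imsetP => [[p _ /eqP]|_].
  by rewrite top_row_shift_down.
by rewrite orbF.
Qed.

Lemma mem_glue_down X P p : (shift_down p \in glue X P) = (p \in P).
Proof.
rewrite !inE (mem_imset _ _ shift_down_inj); case: imsetP => // -[x _ /eqP].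
by rewrite eq_sym top_row_shift_down.
Qed.

Lemma glue_bij : bijective (fun XP => glue XP.1 XP.2).
Proof.
exists (fun Q : {set 'I_n.+1 * T} =>
  ([set x | top_row x \in Q], [set p | shift_down p \in Q])).
  by move=> [X P]; congr pair; apply/setP => z; rewrite inE ?mem_glue_top ?mem_glue_down.
by move=> Q; apply/setP => z; case: (rowP z) => [x|p]; rewrite ?mem_glue_top ?mem_glue_down inE.
Qed.

Lemma card_glue X P : #|glue X P| = #|X| + #|P|.
Proof.
rewrite cardsU (card_imset _ top_row_inj) (card_imset _ shift_down_inj).
rewrite (_ : _ :&: _ = set0) ?cards0 ?subn0 //; apply/setP => z; rewrite !inE.
by apply/negbTE/andP => -[/imsetP[x _ ->] /imsetP[p _ /eqP]]; rewrite top_row_shift_down.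
Qed.

Lemma forall_glue X P (Q : pred ('I_n.+1 * T)) :
  [forall z in glue X P, Q z] =
  [forall x in X, Q (top_row x)] && [forall p in P, Q (shift_down p)].
Proof.
apply/forall_inP/andP => [Qglue|[/forall_inP QX /forall_inP QP] z].
  by split; apply/forall_inP => z z_in; apply: Qglue; rewrite ?mem_glue_top ?mem_glue_down.
by case: (rowP z) => [x|p]; rewrite ?mem_glue_top ?mem_glue_down; [apply: QX|apply: QP].
Qed.

Lemma forall2_glue X P (R : rel ('I_n.+1 * T)) : symmetric R ->
  [forall z in glue X P, forall w in glue X P, R z w] =
  [&& [forall x in X, forall y in X, R (top_row x) (top_row y)],
      [forall p in P, forall x in X, R (shift_down p) (top_row x)] &
      [forall p in P, forall q in P, R (shift_down p) (shift_down q)]].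
Proof.
move=> R_sym; apply/forall_inP/and3P => [R_glue|[RX RPX RP] z z_in].
  have R_in z w : z \in glue X P -> w \in glue X P -> R z w.
    by move=> /R_glue /forall_inP; apply.
  by split; apply/forall_inP => a a_in; apply/forall_inP => b b_in; apply: R_in;
    rewrite ?mem_glue_top ?mem_glue_down.
apply/forall_inP => w; case: (rowP z) z_in => [x|p]; case: (rowP w) => [y|q];
  rewrite ?mem_glue_top ?mem_glue_down => a_in b_in.
- by move: RX => /forall_inP/(_ x a_in)/forall_inP; apply.
- by rewrite R_sym; move: RPX => /forall_inP/(_ q b_in)/forall_inP; apply.
- by move: RPX => /forall_inP/(_ p a_in)/forall_inP; apply.
- by move: RP => /forall_inP/(_ p a_in)/forall_inP; apply.
Qed.

Lemma sum_glue (F : {set 'I_n.+1 * T} -> nat) :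
  \sum_Q F Q = \sum_X \sum_P F (glue X P).
Proof. by rewrite pair_bigA (reindex _ (onW_bij _ glue_bij)). Qed.
End Glue.

(** * Packings of k-mers with forbidden cells *)

Section Packings.
Variables k m : nat.

(* [cell r (true, c) j] and [cell r (false, c) j] are the j-th cells of the
   horizontal and of the vertical k-mer whose first cell is (r, c). *)
Definition cell (r : nat) (x : bool * 'I_m) (j : nat) : nat * nat :=
  if x.1 then (r, x.2 + j) else (r + j, nat_of_ord x.2).

Definition covers r x (z : nat * nat) := [exists j : 'I_k, cell r x j == z].
Definition hits (pi : pred (nat * nat)) r x := [exists j : 'I_k, pi (cell r x j)].
Definition overlap r x r' x' := hits (covers r x) r' x'.

Definition placement n := ('I_n * (bool * 'I_m))%type.

Definition fits n (p : placement n) :=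
  if p.2.1 then p.2.2 + k <= m else p.1 + k <= n.

(* [pi] marks the cells already occupied by k-mers coming from rows above. *)
Definition admissible n (pi : pred (nat * nat)) (p : placement n) :=
  fits p && ~~ hits pi p.1 p.2.

Definition apart n (p q : placement n) := (p != q) ==> ~~ overlap p.1 p.2 q.1 q.2.

Definition packing n s pi (P : {set placement n}) :=
  [&& #|P| == s, [forall p in P, admissible pi p] & [forall p in P, forall q in P, apart p q]].

Definition npackings n s pi := \sum_(P : {set placement n} | packing s pi P) 1.

(* The k-mers starting in the top row; these conditions do not depend on the
   number of rows, since a vertical k-mer there fits as soon as k <= n.+1. *)
Definition row_packing (pi : pred (nat * nat)) (X : {set bool * 'I_m}) :=
  [forall x in X, (x.1 ==> (x.2 + k <= m)) && ~~ hits pi 0 x]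
  && [forall x in X, forall y in X, (x != y) ==> ~~ overlap 0 x 0 y].

(* Forbidden cells of the rows below the top one, renumbered from 0: those of
   [pi] and those covered by the k-mers of [X]. *)
Definition shadow (pi : pred (nat * nat)) (X : {set bool * 'I_m}) : pred (nat * nat) :=
  fun z => pi (z.1.+1, z.2) || [exists x in X, covers 0 x (z.1.+1, z.2)].

Lemma cellS r x j : cell r.+1 x j = ((cell r x j).1.+1, (cell r x j).2).
Proof. by rewrite /cell; case: ifP. Qed.

Lemma overlapC r x r' x' : overlap r x r' x' = overlap r' x' r x.
Proof.
by apply/existsP/existsP => -[j /existsP[j' /eqP E]]; exists j'; apply/existsP; exists j; rewrite E.
Qed.

Lemma overlapSS r x r' x' : overlap r.+1 x r'.+1 x' = overlap r x r' x'.
Proof.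
apply: eq_existsb => j; apply: eq_existsb => j'.
by rewrite !cellS !xpair_eqE eqSS.
Qed.

Lemma hits_shadow pi X r x :
  hits (shadow pi X) r x = hits pi r.+1 x || [exists y in X, overlap 0 y r.+1 x].
Proof.
apply/existsP/orP => [[j]|[/existsP[j pi_j]|/existsP[y /andP[y_in /existsP[j cov]]]]].
- rewrite /shadow -cellS => /orP[pi_j|/existsP[y /andP[y_in cov]]].
    by left; apply/existsP; exists j.
  by right; apply/existsP; exists y; rewrite y_in; apply/existsP; exists j.
- by exists j; rewrite /shadow -cellS pi_j.
- by exists j; rewrite /shadow -cellS; apply/orP; right; apply/existsP; exists y; rewrite y_in.
Qed.

Lemma hits_pred0 r x : hits pred0 r x = false.
Proof. by apply/existsP => -[]. Qed.

Lemma admissible_top n pi x : k <= n.+1 ->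
  admissible pi (top_row n x) = (x.1 ==> (x.2 + k <= m)) && ~~ hits pi 0 x.
Proof. by rewrite /admissible /fits /=; case: x.1 => // ->. Qed.

Lemma admissible_down n pi (p : placement n) :
  admissible pi (shift_down p) = fits p && ~~ hits pi p.1.+1 p.2.
Proof. by rewrite /admissible /fits /= addSn ltnS. Qed.

Lemma admissible_shadow n pi X (p : placement n) :
  admissible (shadow pi X) p =
  admissible pi (shift_down p) && [forall y in X, ~~ overlap 0 y p.1.+1 p.2].
Proof. by rewrite admissible_down /admissible hits_shadow negb_or andbA negb_exists_in. Qed.

Lemma apart_top n x y : apart (top_row n x) (top_row n y) = (x != y) ==> ~~ overlap 0 x 0 y.
Proof. by rewrite /apart (inj_eq (@top_row_inj _ n)). Qed.

Lemma apart_down_top n (p : placement n) x :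
  apart (shift_down p) (top_row n x) = ~~ overlap 0 x p.1.+1 p.2.
Proof. by rewrite /apart eq_sym top_row_shift_down overlapC. Qed.

Lemma apart_down n (p q : placement n) : apart (shift_down p) (shift_down q) = apart p q.
Proof. by rewrite /apart (inj_eq (@shift_down_inj _ n)) /= overlapSS. Qed.

Lemma packing_glue n s pi X (P : {set placement n}) : k <= n.+1 ->
  packing s pi (glue X P) =
  [&& row_packing pi X, #|X| <= s & packing (s - #|X|) (shadow pi X) P].
Proof.
move=> le_k; rewrite /packing /row_packing card_glue forall_glue forall2_glue; last first.
  by move=> z w; rewrite /apart eq_sym overlapC.
have -> : (#|X| + #|P| == s) = (#|X| <= s) && (#|P| == s - #|X|).
  by apply/eqP/andP => [<-|[le_X /eqP ->]]; [rewrite leq_addr addKn | rewrite subnKC].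
rewrite (eq_forallb_in (fun x _ => admissible_top pi x le_k)).
rewrite (eq_forallb_in (fun p _ => admissible_shadow pi X p)) !forall_in_andb.
rewrite (eq_forallb_in (fun x _ => eq_forallb_in (fun y _ => apart_top n x y))).
rewrite (eq_forallb_in (fun p _ => eq_forallb_in (fun x _ => apart_down_top p x))).
rewrite (eq_forallb_in (fun p _ => eq_forallb_in (fun q _ => apart_down p q))).
apply/idP/idP.
  by case/and5P => /andP[-> ->] /and3P[/andP[-> ->] -> ->] -> -> ->.
by case/and5P => /andP[/andP[-> ->] ->] -> -> /andP[/andP[-> ->] ->] ->.
Qed.

Lemma npackings_rec n s pi : k <= n.+1 ->
  npackings n.+1 s pi =
  \sum_(X | row_packing pi X && (#|X| <= s)) npackings n (s - #|X|) (shadow pi X).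
Proof.
move=> le_k.
have row_sum X : \sum_(P : {set placement n}) (if packing s pi (glue X P) then 1 else 0) =
    if row_packing pi X && (#|X| <= s) then npackings n (s - #|X|) (shadow pi X) else 0.
  under eq_bigr => P _ do rewrite packing_glue // andbA.
  case: ifP => [X_ok|X_nok]; last by rewrite big1 // => P _; rewrite X_nok.
  by rewrite /= -big_mkcond.
by rewrite {1}/npackings big_mkcond sum_glue (eq_bigr _ (fun X _ => row_sum X)) [RHS]big_mkcond.
Qed.

End Packings.

(** * Polynomiality in the number of rows *)

Section Polynomiality.
Variables k m : nat.
Hypothesis k_gt0 : 0 < k.

Lemma npackings0 n pi : npackings k m n 0 pi = 1.
Proof.
rewrite /npackings (big_pred1 set0) // => P; rewrite /packing cards_eq0.
by apply/and3P/eqP => [[/eqP] //|->]; split=> //; apply/forallP => p; rewrite inE.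
Qed.

Lemma eq_npackings n s pi pi' : pi =1 pi' -> npackings k m n s pi = npackings k m n s pi'.
Proof.
move=> eq_pi; apply: eq_bigl => P; rewrite /packing; congr [&& _, _ & _].
apply: eq_forallb => p; rewrite /admissible /hits.
by under eq_existsb => j do rewrite eq_pi.
Qed.

Lemma row_packing_set0 pi s :
  row_packing k pi (set0 : {set bool * 'I_m}) && (#|(set0 : {set bool * 'I_m})| <= s).
Proof. by rewrite cards0 andbT; apply/andP; split; apply/forallP => x; rewrite inE. Qed.

Lemma npackings_recz s pi n : k.-1 <= n ->
  Posz (npackings k m n.+1 s pi) =
  (\sum_(X : {set bool * 'I_m} | row_packing k pi X && (#|X| <= s)%N)
     Posz (npackings k m n (s - #|X|)%N (shadow k pi X)))%R.
Proof.
move=> le_n; rewrite npackings_rec; last by lia.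
by rewrite (big_morph Posz PoszD (erefl : Posz 0 = 0%R)).
Qed.

Lemma shadow_set0 pi z : @shadow k m pi set0 z = pi (z.1.+1, z.2).
Proof. by rewrite /shadow orbC; case: existsP => // -[x]; rewrite inE. Qed.

Lemma shadow_below (pi : pred (nat * nat)) X h : (forall z, pi z -> z.1 < h) ->
  forall z, @shadow k m pi X z -> z.1 < h.-1 + k.-1.
Proof.
move=> pi_h z /orP[/pi_h /=|/existsP[x /andP[_ /existsP[j /eqP]]]]; first lia.
by rewrite /cell; case: x.1 => -[<-]; have := ltn_ord j; lia.
Qed.

Lemma bdiff_npackings s h (pi : pred (nat * nat)) : (forall z, pi z -> z.1 < h) ->
  forall n, k * s + h < n -> bdiff s.+1 (fun y => Posz (npackings k m y s pi)) n = 0%R.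
Proof.
elim/ltn_ind: s h pi => -[|s] IHs h pi pi_h n lt_n.
  by rewrite bdiffS; apply: diffn_eq0 => i _; rewrite !npackings0 subrr.
have shadow_term h' (pi' : pred (nat * nat)) (X : {set bool * 'I_m}) :
    (forall z, pi' z -> z.1 < h') -> X != set0 -> #|X| <= s.+1 ->
    forall y, k * s.+1 + h'.-1 <= y ->
    bdiff s.+1 (fun y => Posz (npackings k m y (s.+1 - #|X|) (shadow k pi' X))) y = 0%R.
  move=> pi'_h; rewrite -card_gt0 => X_gt0 le_X y le_y.
  have lt_s' : s.+1 - #|X| < s.+1 by lia.
  have := @bdiff_eq0_lift _ _ _ (IHs _ lt_s' _ _ (shadow_below (X := X) pi'_h)) #|X|.-1 y.
  by rewrite (_ : (s.+1 - #|X|).+1 + #|X|.-1 = s.+1); [apply; nia | lia].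
(* For h = 0 the empty top row reproduces the count itself, which one difference cancels. *)
elim: h pi pi_h n lt_n => [|h IHh] pi pi_h n lt_n.
  have pi0 z : pi z = false by apply/negP => /pi_h.
  have diff_rec y : k.-1 <= y ->
      (Posz (npackings k m y.+1 s.+1 pi) - Posz (npackings k m y s.+1 pi) =
      \sum_(X : {set bool * 'I_m} | row_packing k pi X && (#|X| <= s.+1)%N && (X != set0))
        Posz (npackings k m y (s.+1 - #|X|)%N (shadow k pi X)))%R.
    move=> le_y; rewrite (npackings_recz _ _ le_y) (bigD1 set0) ?row_packing_set0 //=.
    rewrite cards0 subn0.
    have shadow0 : shadow k pi (set0 : {set bool * 'I_m}) =1 pi.
      by move=> z; rewrite shadow_set0 !pi0.
    by rewrite (eq_npackings _ _ shadow0) addrAC subrr add0r.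
  rewrite bdiffS (bdiff_shift_sum diff_rec); last by nia.
  by rewrite big1 // => X /andP[/andP[_ le_X] X_nz]; apply: (shadow_term 0); rewrite ?addn0 //; lia.
rewrite (bdiff_shift_sum (npackings_recz s.+1 pi)); last by nia.
rewrite (bigD1 set0) ?row_packing_set0 //= big1 ?addr0 => [|X /andP[/andP[_ le_X] X_nz]].
  rewrite cards0 subn0; apply: IHh; last by lia.
  by move=> z; rewrite shadow_set0 => /pi_h /=; lia.
have := @bdiff_eq0_lift _ _ _ (shadow_term h.+1 pi X pi_h X_nz le_X) 1 n.-1.
by rewrite (addn1 s.+1); apply; lia.
Qed.
End Polynomiality.

(** * Configurations as packings *)

Lemma coversE k m r (x : bool * 'I_m) a b : covers k r x (a, b) =
  if x.1 then (a == r) && (x.2 <= b < x.2 + k) else (b == x.2) && (r <= a < r + k).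
Proof.
case: x => [[] c] /=; apply/existsP/andP => [[j /eqP[<- <-]]|[/eqP ->]].
- by split=> //; have := ltn_ord j; lia.
- move=> le_b; have lt_j : b - c < k by lia.
  by exists (Ordinal lt_j); apply/eqP; rewrite /cell /=; congr pair; lia.
- by split=> //; have := ltn_ord j; lia.
- move=> le_a; have lt_j : a - r < k by lia.
  by exists (Ordinal lt_j); apply/eqP; rewrite /cell /=; congr pair; lia.
Qed.

Lemma forall_imset (aT rT : finType) (f : aT -> rT) (D : {set aT}) (Q : pred rT) :
  [forall z in f @: D, Q z] = [forall x in D, Q (f x)].
Proof.
apply/forall_inP/forall_inP => [Qf x x_in|Q_ z /imsetP[x x_in ->]]; last exact: Q_.
by apply: Qf; apply: imset_f.
Qed.

Lemma imset_inj_in (aT rT : finType) (f : aT -> rT) (D : {pred aT}) :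
  {in D &, injective f} ->
  {in [pred P : {set aT} | P \subset D] &, injective (fun P : {set aT} => f @: P)}.
Proof.
move=> f_inj.
have imsetK (P : {set aT}) : P \subset D -> P = [set x in D | f x \in f @: P].
  move=> /subsetP PD; apply/setP => x; rewrite inE; apply/idP/andP => [x_in|[x_D]].
    by rewrite PD ?imset_f.
  by case/imsetP => y y_in /f_inj-> //; apply: PD.
by move=> P Q PD QD /= E; rewrite (imsetK P PD) (imsetK Q QD) E.
Qed.

Section Configurations.
Variables k n m : nat.

Definition kmer_of (p : placement m n) : {set site n m} :=
  [set z | covers k p.1 p.2 (val z.1, val z.2)].

Lemma mem_kmer_of p z : (z \in kmer_of p) =
  if p.2.1 then (z.1 == p.1) && (p.2.2 <= z.2 < p.2.2 + k)
  else (z.2 == p.2.2) && (p.1 <= z.1 < p.1 + k).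
Proof. by rewrite inE coversE. Qed.

Lemma covers_in_grid (p : placement m n) a b :
  fits k p -> covers k p.1 p.2 (a, b) -> a < n /\ b < m.
Proof.
case: p => r [[] c]; rewrite /fits coversE /= => fit /andP[/eqP-> le_b].
  by have := ltn_ord r; lia.
by have := ltn_ord c; lia.
Qed.

Lemma kmer_of_kmer p : fits k p -> is_kmer k (kmer_of p).
Proof.
by case: p => r [[] c]; rewrite /fits /= => fit; apply/orP; [left|right]; apply/existsP; exists r;
  apply/existsP; exists c; rewrite fit; apply/eqP/setP => z; rewrite mem_kmer_of inE /=.
Qed.

Lemma is_kmerP A : is_kmer k A -> exists2 p, fits k p & kmer_of p = A.
Proof.
case/orP => /existsP[r /existsP[c /andP[fit /eqP->]]];
  [exists (r, (true, c)) | exists (r, (false, c))] => //;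
  by apply/setP => z; rewrite mem_kmer_of inE.
Qed.

Lemma overlap_kmer_of (p q : placement m n) : fits k p -> fits k q ->
  overlap k p.1 p.2 q.1 q.2 = ~~ [disjoint kmer_of p & kmer_of q].
Proof.
move=> fit_p fit_q; rewrite -setI_eq0; apply/existsP/set0Pn => [[j cov_p]|[z]].
  case E: (cell q.1 q.2 j) cov_p => [a b] cov_p.
  have cov_q : covers k q.1 q.2 (a, b) by apply/existsP; exists j; rewrite E.
  have [lt_a lt_b] := covers_in_grid fit_q cov_q.
  by exists (Ordinal lt_a, Ordinal lt_b); rewrite !inE cov_p.
by rewrite !inE => /andP[cov_p /existsP[j /eqP E]]; exists j; rewrite E.
Qed.

(* For k = 1 the horizontal and the vertical monomer on a site coincide. *)
Hypothesis k_gt1 : 1 < k.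

Lemma anchor_in_kmer_of (p : placement m n) : (p.1, p.2.2) \in kmer_of p.
Proof. by rewrite mem_kmer_of /= !eqxx leqnn /=; case: ifP; lia. Qed.

Lemma kmer_of_inj : {in [pred p | fits k p] &, injective kmer_of}.
Proof.
move=> [r [o c]] [r' [o' c']]; rewrite !inE /fits /= => fit fit' E.
have [er ec] : r = r' /\ c = c'.
  move: (anchor_in_kmer_of (r, (o, c))) (anchor_in_kmer_of (r', (o', c'))).
  rewrite {1}E -{2}E !mem_kmer_of /= -!val_eqE /=.
  by case: (o) (o') => [] [] /andP[/eqP e1 le1] /andP[/eqP e2 le2];
    split; apply: ord_inj; lia.
subst r c.
case: o o' fit fit' E => [] [] //= fit _ E; exfalso.
  have lt_c : c'.+1 < m by lia.
  have : (r', Ordinal lt_c) \in kmer_of (r', (true, c')) by rewrite mem_kmer_of /= eqxx; lia.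
  by rewrite E mem_kmer_of /= -val_eqE /= => /andP[/eqP]; lia.
have lt_r : r'.+1 < n by lia.
have : (Ordinal lt_r, c') \in kmer_of (r', (false, c')) by rewrite mem_kmer_of /= eqxx; lia.
by rewrite E mem_kmer_of /= -val_eqE /= => /andP[/eqP]; lia.
Qed.

Lemma is_config_kmer_of s (P : {set placement m n}) : (forall p, p \in P -> fits k p) ->
  is_config k s (kmer_of @: P) = packing k s pred0 P.
Proof.
move=> P_fit; have inj : {in P &, injective kmer_of}.
  by move=> p q /P_fit p_fit /P_fit q_fit; apply: kmer_of_inj.
rewrite /is_config /packing !forall_imset card_in_imset //.
have -> : [forall p in P, is_kmer k (kmer_of p)] by apply/forall_inP => p /P_fit /kmer_of_kmer.
have -> : [forall p in P, admissible k pred0 p].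
  by apply/forall_inP => p /P_fit; rewrite /admissible hits_pred0 andbT.
congr [&& _, _ & _]; apply: eq_forallb_in => p p_in; rewrite forall_imset.
apply: eq_forallb_in => q q_in.
by rewrite /apart (inj_in_eq inj) // overlap_kmer_of ?negbK ?P_fit.
Qed.

Lemma num_configs_npackings s : num_configs k s n m = npackings k m n s pred0.
Proof.
rewrite /num_configs /npackings sum1dep_card.
set Packs := [set P | packing k s pred0 P].
have fit_of P : P \in Packs -> forall p, p \in P -> fits k p.
  by rewrite inE => /and3P[_ /forall_inP adm _] p /adm /andP[].
have packs_inj : {in Packs &, injective (fun P : {set placement m n} => kmer_of @: P)}.
  move=> P Q P_pack Q_pack; apply: (imset_inj_in kmer_of_inj); apply/subsetP => p;
    [exact: (fit_of _ P_pack p) | exact: (fit_of _ Q_pack p)].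
rewrite -(card_in_imset packs_inj); apply: eq_card => Q; rewrite inE.
apply/idP/imsetP => [Q_conf|[P P_pack ->]]; last first.
  by rewrite /= (is_config_kmer_of s (fit_of _ P_pack)); rewrite inE in P_pack.
set P := [set p | fits k p && (kmer_of p \in Q)].
have P_fit p : p \in P -> fits k p by rewrite inE => /andP[].
have EQ : kmer_of @: P = Q.
  apply/setP => A; apply/imsetP/idP => [[p] | A_in]; first by rewrite inE => /andP[_ ?] ->.
  case/and3P: Q_conf => /forall_inP/(_ A A_in)/is_kmerP[p p_fit pA] _ _; subst A.
  by exists p; rewrite // inE p_fit.
by exists P; rewrite // inE -(is_config_kmer_of s P_fit) EQ.
Qed.

End Configurations.

Definition transpose_placement {n m : nat} (p : placement m n) : placement n m :=
  (p.2.2, (~~ p.2.1, p.1)).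

Section Transposition.
Variables k n m : nat.

Lemma transpose_placementK : cancel (@transpose_placement n m) (@transpose_placement m n).
Proof. by case=> r [o c]; rewrite /transpose_placement /= negbK. Qed.

Lemma cell_transpose (r : 'I_n) o (c : 'I_m) j :
  cell c (~~ o, r) j = ((cell r (o, c) j).2, (cell r (o, c) j).1).
Proof. by case: o. Qed.

Lemma overlap_transpose (r r' : 'I_n) o o' (c c' : 'I_m) :
  overlap k c (~~ o, r) c' (~~ o', r') = overlap k r (o, c) r' (o', c').
Proof.
apply: eq_existsb => j'; apply: eq_existsb => j.
by rewrite !cell_transpose !xpair_eqE andbC.
Qed.

Lemma packing_transpose s (P : {set placement m n}) :
  packing k s pred0 (transpose_placement @: P) = packing k s pred0 P.
Proof.
have tp_inj := can_inj transpose_placementK.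
rewrite /packing card_imset // !forall_imset; congr [&& _, _ & _].
  by apply: eq_forallb_in => -[r [[] c]] _; rewrite /admissible !hits_pred0.
apply: eq_forallb_in => -[r [o c]] _; rewrite forall_imset.
by apply: eq_forallb_in => -[r' [o' c']] _; rewrite /apart (inj_eq tp_inj) overlap_transpose.
Qed.
End Transposition.

Lemma npackings_transpose k n m s : npackings k m n s pred0 = npackings k n m s pred0.
Proof.
have tp_bij : bijective (fun Q : {set placement n m} => transpose_placement @: Q).
  exists (fun P : {set placement m n} => transpose_placement @: P) => P;
    rewrite -imset_comp;
    by under eq_imset => p do rewrite /= transpose_placementK; rewrite imset_id.
rewrite /npackings (reindex _ (onW_bij _ tp_bij)).
by apply: eq_bigl => Q; rewrite packing_transpose.
Qed.

Local Open Scope ring_scope.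

Theorem corollary1 (k s n m : nat) (hk : (2 <= k)%N)
  (hn : ((k.+1) * s + 1 <= n)%N) (hm : ((k.+1) * s + 1 <= m)%N) :
  \sum_(i < (2 * s + 1).+1)
     (-1) ^+ i * ('C(2 * s + 1, i))%:Z * (num_configs k s (n - i) (m - i))%:Z = 0 :> int.
Proof.
have k_gt0 : (0 < k)%N by lia.
pose a x y := Posz (num_configs k s x y).
have no_cells (z : nat * nat) : pred0 z -> (z.1 < 0)%N by [].
have rows x y : (k.-1 * s + s.+1 <= x)%N -> bdiff s.+1 (a^~ y) x = 0.
  move=> le_x; rewrite (@eq_bdiff _ _ (fun x => Posz (npackings k y x s pred0))).
    by apply: (bdiff_npackings _ k_gt0 no_cells); lia.
  by move=> x'; rewrite /a num_configs_npackings.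
have cols x y : (k.-1 * s + s.+1 <= y)%N -> bdiff s.+1 (a x) y = 0.
  move=> le_y; rewrite (@eq_bdiff _ _ (fun y => Posz (npackings k x y s pred0))).
    by apply: (bdiff_npackings _ k_gt0 no_cells); lia.
  by move=> y'; rewrite /a num_configs_npackings // (npackings_transpose k x y').
have := diffn_diag_eq0 rows cols (x := n) (y := m).
by rewrite (_ : ((s.+1 + s.+1).-1 = 2 * s + 1)%N); [apply; lia | lia].
Qed.
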